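(* Let $n\ge 4$, $N=\{1,\dots,n\}$, fix distinct $i_1,i_2\in N$ and let $\hat N^c=N\setminus\{i_1,i_2\}$. Then the inequality $$\sum_{j\in\hat N^c}\left(x_{i_1j}+x_{ji_1}+x_{i_2j}\right)-x_{i_2i_1}-\sum_{j,j'\in\hat N^c:\,j\ne j'} x_{jj'}\le 3-\frac{(n-4)(n-5)}{2}$$ is a valid inequality for the weak order polytope $P^n_{WO}$, i.e. it holds for every point $x\in P^n_{WO}$.
   Context: Let $N=\{1,\dots,n\}$ and $A_N=\{(i,j): i,j\in N, i\ne j\}$. A weak order on $N$ is a binary relation $W\subseteq N\times N$ that is reflexive, transitive and total; $(i,j)\in W$ is read ''$i$ is preferred over or tied with $j$''. The characteristic vector of $W$ is $x^W\in\{0,1\}^{A_N}$ with $x^W_{(i,j)}=1$ if $(i,j)\in W$ and $0$ otherwise. The weak order polytope $P^n_{WO}$ is the convex hull of the characteristic vectors of all weak orders on $N$; its points are vectors $x\in\mathbb{R}^{A_N}$ and $x_{ij}$ denotes the coordinate $x_{(i,j)}$. *)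

From mathcomp Require Import all_boot all_order all_algebra.
Set Implicit Arguments. Unset Strict Implicit. Unset Printing Implicit Defensive.
Import Order.TTheory GRing.Theory Num.Theory.
Local Open Scope ring_scope.

Definition is_weak_order (n : nat) (W : {set 'I_n * 'I_n}) : bool :=
  [&& [forall i, (i, i) \in W],
      [forall i, forall j, forall k,
         ((i, j) \in W) && ((j, k) \in W) ==> ((i, k) \in W)] &
      [forall i, forall j, ((i, j) \in W) || ((j, i) \in W)]].

(* Characteristic vector x^W, coordinate (i,j) (used only for i <> j). *)
Definition char_vec (R : numDomainType) (n : nat) (W : {set 'I_n * 'I_n})
  (i j : 'I_n) : R := if (i, j) \in W then 1 else 0.

(* x : R^{A_N}, given as a function on pairs; only off-diagonal
   coordinates are meaningful.  x lies in P^n_WO iff it is a convex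
   combination of characteristic vectors of weak orders. *)
Definition in_weak_order_polytope (R : numDomainType) (n : nat)
  (x : 'I_n -> 'I_n -> R) : Prop :=
  exists lam : {set 'I_n * 'I_n} -> R,
    [/\ (forall W, 0 <= lam W),
        (forall W, ~~ is_weak_order W -> lam W = 0),
        \sum_W lam W = 1 &
        (forall i j : 'I_n, i != j ->
           x i j = \sum_W lam W * char_vec R W i j)].

(* Fix a weak order W and let m = n - 2 be the number of points outside
   {i1, i2}, t the number of them tied with i1 and c the number of them weakly
   below i2.  Totality gives x_{i1 j} + x_{j i1} = 1 + [j tied with i1], and
   the off-diagonal sum over the complement is m(m-1)/2 plus the number of
   tied unordered pairs, among which are the t(t-1)/2 pairs of points tied
   with i1 (transitivity).  If i2 is weakly above i1, the left-hand side is
   thus at most 2m - m(m-1)/2 + (t - 1) - t(t-1)/2, and (t-1)(t-2) >= 0 for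
   an integer t.  Otherwise no point is both tied with i1 and below i2, so
   t + c <= m.  Either way the vertex value is at most
   2m - m(m-1)/2 = 3 - (n-4)(n-5)/2, and linearity extends the bound to the
   whole polytope. *)

From mathcomp Require Import all_boot all_order all_algebra.
From mathcomp Require Import lra zify ring.
Set Implicit Arguments.
Unset Strict Implicit.
Unset Printing Implicit Defensive.

Import Order.TTheory GRing.Theory Num.Theory.
Local Open Scope ring_scope.

Section WeakOrder.
Variables (n : nat) (W : {set 'I_n * 'I_n}).
Hypothesis HW : is_weak_order W.

Lemma weak_order_trans i j k : (i, j) \in W -> (j, k) \in W -> (i, k) \in W.
Proof.
case/and3P: HW => _ /forallP/(_ i)/forallP/(_ j)/forallP/(_ k) + _ ij jk.
by rewrite ij jk.
Qed.

Lemma weak_order_total i j : ((i, j) \in W) || ((j, i) \in W).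
Proof. by case/and3P: HW => _ _ /forallP/(_ i)/forallP/(_ j). Qed.

Definition tied i j := ((i, j) \in W) && ((j, i) \in W).

Lemma tied_trans i j k : tied i j -> tied i k -> tied j k.
Proof.
case/andP=> ij ji /andP[ik ki].
by rewrite /tied (weak_order_trans ji ik) (weak_order_trans ki ij).
Qed.

Lemma char_vec_addC (R : numDomainType) i j :
  char_vec R W i j + char_vec R W j i = 1 + (tied i j)%:R.
Proof.
rewrite /char_vec /tied; move: (weak_order_total i j).
by case: ((i, j) \in W); case: ((j, i) \in W); rewrite ?addr0 ?add0r.
Qed.

End WeakOrder.

Section SumsOffTwo.
Variables (n : nat) (i1 i2 : 'I_n).

Lemma card_off_two : i1 != i2 ->
  #|[pred j : 'I_n | (j != i1) && (j != i2)]| = (n - 2)%N.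
Proof.
move=> i12; have := card_ord n.
rewrite (cardD1 i1) (cardD1 i2) !inE eq_sym i12 /=.
have -> : #|[predD1 [predD1 'I_n & i1] & i2]| =
          #|[pred j : 'I_n | (j != i1) && (j != i2)]|.
  by apply: eq_card => k; rewrite !inE andbT andbC.
lia.
Qed.

Lemma sum_off_two_const (V : nmodType) (c : V) : i1 != i2 ->
  \sum_(j | (j != i1) && (j != i2)) c = c *+ (n - 2).
Proof. by move=> i12; rewrite -(card_off_two i12) -sumr_const. Qed.

Lemma sum_off_threeE (V : zmodType) (j : 'I_n) (f : 'I_n -> V) :
  (j != i1) && (j != i2) ->
  \sum_(j' | [&& j' != i1, j' != i2 & j' != j]) f j' =
  \sum_(j' | (j' != i1) && (j' != i2)) f j' - f j.
Proof.
move=> Sj; rewrite [in RHS](bigD1 j Sj) /= addrC addrK.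
by apply: eq_bigl => k; rewrite andbA.
Qed.

Lemma sum_off_pairsC (V : nmodType) (F : 'I_n -> 'I_n -> V) :
  \sum_(j | (j != i1) && (j != i2))
      \sum_(j' | [&& j' != i1, j' != i2 & j' != j]) F j j' =
  \sum_(j | (j != i1) && (j != i2))
      \sum_(j' | [&& j' != i1, j' != i2 & j' != j]) F j' j.
Proof.
rewrite (exchange_big_dep (fun j => (j != i1) && (j != i2))) /=; last first.
  by move=> a b _ /and3P[-> -> _].
apply: eq_bigr => a /andP[a1 a2]; apply: eq_bigl => b.
by rewrite a1 a2 -andbA [a == b]eq_sym.
Qed.

End SumsOffTwo.

Lemma weak_order_polytope_le (R : realFieldType) (n : nat)
    (F : ('I_n -> 'I_n -> R) -> R) (b : R) (x : 'I_n -> 'I_n -> R) :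
  (forall y z, (forall i j, i != j -> y i j = z i j) -> F y = F z) ->
  (forall (lam : {set 'I_n * 'I_n} -> R) v,
     F (fun i j => \sum_W lam W * v W i j) = \sum_W lam W * F (v W)) ->
  (forall W, is_weak_order W -> F (char_vec R W) <= b) ->
  in_weak_order_polytope x -> F x <= b.
Proof.
move=> F_offdiag F_lin F_vertex [lam [lam_ge0 lam_wo lam_sum1 xE]].
rewrite (F_offdiag x (fun i j => \sum_W lam W * char_vec R W i j)) // F_lin.
rewrite -[b]mul1r -lam_sum1 mulr_suml; apply: ler_sum => W _.
have [/F_vertex|/lam_wo->] := boolP (is_weak_order W); last by rewrite !mul0r.
exact: ler_wpM2l.
Qed.

Lemma natr_sub1_mul_sub2_ge0 (R : realDomainType) (k : nat) :
  0 <= (k%:R - 1) * (k%:R - 2) :> R.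
Proof.
case: k => [|[|k]]; [lra | by rewrite subrr mul0r |].
by rewrite -[k.+2]addn2 natrD; have := ler0n R k; nra.
Qed.

Lemma ineq_rhsE (R : realFieldType) (n : nat) : (4 <= n)%N ->
  3 - ((n - 4) * (n - 5))%:R / 2 =
  2 * (n - 2)%:R - (n - 2)%:R * ((n - 2)%:R - 1) / 2 :> R.
Proof.
case: n => [|[|[|[|[|k]]]]] //= _; rewrite !subSS !subn0 ?sub0n ?muln0.
  lra.
rewrite natrM -[k.+3]addn3 -[k.+1]addn1 !natrD; by field.
Qed.

Section Inequality.
Variables (R : realFieldType) (n : nat) (i1 i2 : 'I_n).
Hypothesis i12 : i1 != i2.

Definition ineq_lhs (x : 'I_n -> 'I_n -> R) : R :=
  \sum_(j | (j != i1) && (j != i2)) (x i1 j + x j i1 + x i2 j) - x i2 i1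
  - \sum_(j | (j != i1) && (j != i2))
      \sum_(j' | [&& j' != i1, j' != i2 & j' != j]) x j j'.

Lemma ineq_lhs_offdiag x y :
  (forall i j, i != j -> x i j = y i j) -> ineq_lhs x = ineq_lhs y.
Proof.
move=> xy; rewrite /ineq_lhs xy 1?eq_sym //; congr (_ - _ - _).
  by apply: eq_bigr => j /andP[j1 j2]; rewrite !xy // eq_sym.
apply: eq_bigr => j _; apply: eq_bigr => j' /and3P[_ _ j'j].
by rewrite xy // eq_sym.
Qed.

Lemma ineq_lhs_comb (T : finType) (lam : T -> R) (v : T -> 'I_n -> 'I_n -> R) :
  ineq_lhs (fun i j => \sum_t lam t * v t i j) = \sum_t lam t * ineq_lhs (v t).
Proof.
rewrite /ineq_lhs; under [RHS]eq_bigr do rewrite !mulrBr; rewrite !sumrB.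
congr (_ - _ - _).
  under eq_bigr do rewrite -!big_split; rewrite exchange_big /=.
  by apply: eq_bigr => t _; rewrite mulr_sumr; apply: eq_bigr => j _; ring.
under [RHS]eq_bigr do rewrite mulr_sumr; rewrite [RHS]exchange_big /=.
apply: eq_bigr => j _; under [RHS]eq_bigr do rewrite mulr_sumr.
by rewrite [RHS]exchange_big.
Qed.

Section Vertex.
Variable W : {set 'I_n * 'I_n}.
Hypothesis HW : is_weak_order W.

Local Notation m := ((n - 2)%:R : R).
Local Notation ties1 :=
  (\sum_(j | (j != i1) && (j != i2)) (tied W i1 j)%:R : R).
Local Notation below2 :=
  (\sum_(j | (j != i1) && (j != i2)) char_vec R W i2 j).
Local Notation tied_pairs := (\sum_(j | (j != i1) && (j != i2))
  \sum_(j' | [&& j' != i1, j' != i2 & j' != j]) (tied W j j')%:R : R).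

Lemma sum_char_vec_i1 :
  \sum_(j | (j != i1) && (j != i2)) (char_vec R W i1 j + char_vec R W j i1)
  = m + ties1.
Proof.
rewrite -(sum_off_two_const (1 : R) i12) -big_split.
by apply: eq_bigr => j _; apply: char_vec_addC.
Qed.

Lemma sum_char_vec_off_pairs :
  2 * \sum_(j | (j != i1) && (j != i2))
        \sum_(j' | [&& j' != i1, j' != i2 & j' != j]) char_vec R W j j'
  = m * (m - 1) + tied_pairs.
Proof.
rewrite mulr2n mulrDl mul1r {2}sum_off_pairsC -big_split /=.
under eq_bigr => j _ do rewrite -big_split /=.
under eq_bigr => j Sj do
  rewrite (eq_bigr _ (fun j' _ => char_vec_addC HW R j j')) big_split /=
          (sum_off_threeE _ Sj) (sum_off_two_const (1 : R) i12).
by rewrite big_split /= sum_off_two_const // mulr_natl.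
Qed.

Lemma ties1_mul_le : ties1 * (ties1 - 1) <= tied_pairs.
Proof.
have -> : ties1 * (ties1 - 1) = \sum_(j | (j != i1) && (j != i2))
    \sum_(j' | [&& j' != i1, j' != i2 & j' != j])
      (tied W i1 j)%:R * (tied W i1 j')%:R.
  under [RHS]eq_bigr => j Sj do rewrite -mulr_sumr (sum_off_threeE _ Sj).
  rewrite mulrBr mulr1 mulr_suml -sumrB; apply: eq_bigr => j _.
  by rewrite mulrBr; case: (tied W i1 j); rewrite ?mul1r ?mul0r.
apply: ler_sum => j _; apply: ler_sum => j' _.
case t1j: (tied W i1 j); case t1j': (tied W i1 j'); rewrite ?mul0r ?mulr0 //.
by rewrite (tied_trans HW t1j t1j') mulr1.
Qed.

Lemma below2_le : below2 <= m.
Proof.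
rewrite -(sum_off_two_const (1 : R) i12); apply: ler_sum => j _.
by rewrite /char_vec; case: ifP => _; rewrite ?ler01.
Qed.

Lemma ties1_add_below2_le : (i2, i1) \notin W -> ties1 + below2 <= m.
Proof.
move=> n21; rewrite -(sum_off_two_const (1 : R) i12) -big_split.
apply: ler_sum => j _.
rewrite /char_vec /tied; case i1j: ((i1, j) \in W); case ji1: ((j, i1) \in W);
  case i2j: ((i2, j) \in W) => //=; rewrite ?addr0 ?add0r //.
by rewrite (weak_order_trans HW i2j ji1) in n21.
Qed.

Lemma ineq_lhs_char_vec : ineq_lhs (char_vec R W) <= 2 * m - m * (m - 1) / 2.
Proof.
have sumE : \sum_(j | (j != i1) && (j != i2))
    (char_vec R W i1 j + char_vec R W j i1 + char_vec R W i2 j)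
    = m + ties1 + below2 by rewrite big_split /= sum_char_vec_i1.
have pairsE := sum_char_vec_off_pairs; have ties_le := ties1_mul_le.
have pairs_ge0 : 0 <= tied_pairs by do 2!apply: sumr_ge0 => ? _.
rewrite /ineq_lhs sumE; have [n21|n21] := boolP ((i2, i1) \in W).
  have ties1_nat : 0 <= (ties1 - 1) * (ties1 - 2).
    by rewrite -natr_sum natr_sub1_mul_sub2_ge0.
  have := below2_le; rewrite /char_vec n21; nra.
have := ties1_add_below2_le n21; rewrite /char_vec (negbTE n21); nra.
Qed.

End Vertex.

End Inequality.

Theorem mainTheorem5 (R : realFieldType) (n : nat) (i1 i2 : 'I_n)
  (x : 'I_n -> 'I_n -> R) :
  (4 <= n)%N -> i1 != i2 -> in_weak_order_polytope x ->
  \sum_(j | (j != i1) && (j != i2)) (x i1 j + x j i1 + x i2 j) - x i2 i1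
  - \sum_(j | (j != i1) && (j != i2))
      \sum_(j' | [&& j' != i1, j' != i2 & j' != j]) x j j'
  <= 3 - ((n - 4) * (n - 5))%:R / 2.
Proof.
move=> n_ge4 i12 x_in; rewrite ineq_rhsE //.
apply: (weak_order_polytope_le (F := ineq_lhs i1 i2)) x_in.
- exact: ineq_lhs_offdiag.
- by move=> lam v; apply: ineq_lhs_comb.
- by move=> W HW; apply: ineq_lhs_char_vec.
Qed.
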